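(* Let $p$ be a prime and $s\geq 2$. Then (i) $\tau_s(1)=(0,p^{s-2},2p^{s-2},\dots,(p-1)p^{s-2})$; (ii) $\tau_s(p^iu)=p^{i-1}(u,u,\dots,u)$ ($p$ copies, computed in $\mathbb{Z}_{p^{s-1}}$) for all $i\in\{1,\dots,s-1\}$ and $u\in\{0,1,\dots,p^{s-1}-1\}$.
   Context: For $r\geq1$ and $u\in\mathbb{Z}_{p^r}$ with $p$-ary expansion $u=\sum_{i=0}^{r-1}u_ip^i$, $\phi_r(u)=(u_{r-1},\dots,u_{r-1})+(u_0,\dots,u_{r-2})Y_{r-1}\in\mathbb{Z}_p^{p^{r-1}}$, where $Y_1=(0\ 1\ \cdots\ p-1)$ and $Y_k$ is the $k\times p^k$ matrix with first $k-1$ rows $(Y_{k-1}\ \cdots\ Y_{k-1})$ ($p$ copies) and last row $(0,\dots,0,1,\dots,1,\dots,p-1,\dots,p-1)$ (blocks of length $p^{k-1}$); $\phi_1=\mathrm{id}$; $\Phi_r$ applies $\phi_r$ coordinatewise and concatenates. $\gamma_s$ is the coordinate permutation of $\mathbb{Z}_p^{p^{s-1}}$ given by $\gamma_s(\mathbf{x})_{j+ip+1}=\mathbf{x}_{jp^{s-2}+i+1}$ for $j\in\{0,\dots,p-1\}$, $i\in\{0,\dots,p^{s-2}-1\}$. The map $\tau_s:\mathbb{Z}_{p^s}\to\mathbb{Z}_{p^{s-1}}^p$ is $\tau_s(u)=\Phi_{s-1}^{-1}(\gamma_s^{-1}(\phi_s(u)))$; in (ii), $p^iu$ is computed in $\mathbb{Z}_{p^s}$.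 *)

(* Elements of Z_m are represented by their canonical
   representatives in {0,...,m-1} (nat); vectors over Z_m by seq nat or
   finite functions on 'I_p. Coordinates are 0-indexed here (the paper's
   index t corresponds to position t-1). *)
From mathcomp Require Import all_boot all_order.
Set Implicit Arguments. Unset Strict Implicit. Unset Printing Implicit Defensive.

(* Entry (i, c) (0-indexed) of the k x p^k matrix Y_k, defined recursively
   as in the paper: Y_1 = (0 1 ... p-1); the first k-1 rows of Y_k are p
   copies of Y_{k-1} side by side, the last row is
   (0..0, 1..1, ..., p-1..p-1) with blocks of length p^{k-1}. *)
Fixpoint Yent (p k i c : nat) : nat :=
  match k with
  | 0 => 0
  | k'.+1 =>
    match k' with
    | 0 => c
    | _ => if i < k' then Yent p k' i (c %% p ^ k') else c %/ p ^ k'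
    end
  end.

Definition digit (p u i : nat) : nat := (u %/ p ^ i) %% p.

Definition phi (p r u : nat) : seq nat :=
  [seq (digit p u r.-1 + \sum_(i < r.-1) digit p u i * Yent p r.-1 i k) %% p
  | k <- iota 0 (p ^ r.-1)].

Definition Phi (p r : nat) (w : seq nat) : seq nat :=
  flatten [seq phi p r x | x <- w].

(* gamma_s(x)_{j+ip} = x_{j p^{s-2} + i}  (0-indexed) *)
Definition gamma (p s : nat) (x : seq nat) : seq nat :=
  [seq nth 0 x ((m %% p) * p ^ (s - 2) + m %/ p) | m <- iota 0 (p ^ (s - 1))].

Definition gamma_inv (p s : nat) (y : seq nat) : seq nat :=
  [seq nth 0 y (m %/ p ^ (s - 2) + (m %% p ^ (s - 2)) * p)
  | m <- iota 0 (p ^ (s - 1))].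

(* tau_s(u) = Phi_{s-1}^{-1}(gamma_s^{-1}(phi_s(u))) in Z_{p^{s-1}}^p;
   the preimage under Phi_{s-1} is chosen with [pick] (None if none exists). *)
Definition tau (p s u : nat) : option {ffun 'I_p -> 'I_(p ^ (s - 1))} :=
  [pick w : {ffun 'I_p -> 'I_(p ^ (s - 1))} |
     Phi p (s - 1) [seq val (w j) | j <- enum 'I_p] == gamma_inv p s (phi p s u)].

From mathcomp Require Import all_boot all_order.

(* The rows of Y_k are the base-p digit vectors of the column indices, so
   position k of phi_r(a) is the affine form a_{r-1} + sum_i a_i k_i (mod p)
   in the digits of k. Evaluating at k = 0 and k = p^i recovers every digit
   of a < p^r, so phi_r, and hence Phi_r, is injective and tau_s is the unique
   preimage. The permutation gamma_s^-1 cuts phi_s(u) into p blocks, block j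
   collecting the positions k = j + t p, where k_0 = j. On that block phi_s(u)
   is u_{s-1} + u_0 j + sum_l u_{l+1} t_l, which is phi_{s-1} of the number
   with low digits u_1 ... u_{s-2} and top digit u_{s-1} + u_0 j (mod p).
   For u = 1 this number is j p^{s-2}, for u = p v it is v. *)

Set Implicit Arguments. Unset Strict Implicit. Unset Printing Implicit Defensive.

Lemma ltn_addM a b m c : a < m -> b < c -> a + b * m < c * m.
Proof.
move=> a_lt b_lt; apply: (@leq_trans (m + b * m)); first by rewrite ltn_add2r.
by rewrite -mulSn leq_mul2r b_lt orbT.
Qed.

Lemma nth_flatten_uniform (T : Type) (x0 : T) L (ss : seq (seq T)) j t :
  all (fun s => size s == L) ss -> j < size ss -> t < L ->
  nth x0 (flatten ss) (j * L + t) = nth x0 (nth [::] ss j) t.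
Proof.
elim: ss j => [|s ss IHss] [|j] //= /andP [/eqP size_s all_ss] j_lt t_lt.
  by rewrite mul0n add0n nth_cat size_s t_lt.
by rewrite nth_cat size_s mulSn -addnA ltnNge leq_addr /= addKn IHss.
Qed.

Section Tau.

Variable p : nat.
Hypothesis p_gt1 : 1 < p.

Let p_gt0 : 0 < p. Proof. exact: ltnW. Qed.

Let expp_gt0 k : 0 < p ^ k. Proof. by rewrite expn_gt0 p_gt0. Qed.

Lemma digit0 a : digit p a 0 = a %% p.
Proof. by rewrite /digit expn0 divn1. Qed.

Lemma digitD a k l : digit p a (l + k) = digit p (a %/ p ^ k) l.
Proof. by rewrite /digit expnD mulnC divnMA. Qed.

Lemma digitS a l : digit p a l.+1 = digit p (a %/ p) l.
Proof. by rewrite -addn1 digitD expn1. Qed.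

Lemma digit_lt a l : digit p a l < p.
Proof. exact: ltn_pmod. Qed.

Lemma digit_small a l : a < p ^ l -> digit p a l = 0.
Proof. by move=> a_lt; rewrite /digit divn_small ?mod0n. Qed.

Lemma digit_mod a k l : l < k -> digit p (a %% p ^ k) l = digit p a l.
Proof.
elim: l a k => [|l IHl] a [|k] // lt_lk.
  by rewrite !digit0 expnS modn_dvdm ?dvdn_mulr.
by rewrite !digitS expnSr -modn_divl IHl.
Qed.

Lemma digit_addMexp a b k l : a < p ^ k ->
  digit p (a + b * p ^ k) l = if l < k then digit p a l else digit p b (l - k).
Proof.
move=> a_lt; case: ltnP => [lt_lk | le_kl].
  by rewrite -(digit_mod _ lt_lk) addnC modnMDl modn_small // digit_mod.
by rewrite -{1}(subnK le_kl) digitD addnC divnMDl // divn_small // addn0.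
Qed.

Lemma digit_pow i l : digit p (p ^ i) l = (l == i).
Proof.
have := @digit_addMexp 0 1 i l (expp_gt0 i); rewrite add0n mul1n => ->.
case: ltngtP => [lt_li | lt_il | ->]; first exact: digit_small.
  by rewrite digit_small // -(expn0 p) ltn_exp2l // subn_gt0.
by rewrite subnn digit0 modn_small.
Qed.

Lemma digit_inj r a b : a < p ^ r -> b < p ^ r ->
  (forall l, l < r -> digit p a l = digit p b l) -> a = b.
Proof.
elim: r a b => [|r IHr] a b.
  by rewrite expn0 !ltnS !leqn0 => /eqP-> /eqP->.
move=> a_lt b_lt eq_ab; rewrite (divn_eq a p) (divn_eq b p) -!digit0 eq_ab //.
congr (_ * _ + _); apply: IHr => [||l lt_lr].
- by rewrite ltn_divLR // -expnSr.
- by rewrite ltn_divLR // -expnSr.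
by rewrite -!digitS eq_ab.
Qed.

Lemma YentSS k i c :
  Yent p k.+2 i c = if i < k.+1 then Yent p k.+1 i (c %% p ^ k.+1) else c %/ p ^ k.+1.
Proof. by []. Qed.

Lemma Yent_digit k i c : i < k -> c < p ^ k -> Yent p k i c = digit p c i.
Proof.
elim: k i c => [|[|k] IHk] i c //.
  by rewrite ltnS leqn0 expn1 => /eqP-> c_lt; rewrite digit0 modn_small.
move=> lt_ik c_lt; rewrite YentSS; case: ifP => [lt_ik' | /negbT].
  by rewrite IHk ?digit_mod ?ltn_pmod.
rewrite -leqNgt => le_ki.
have -> : i = k.+1 by apply/eqP; rewrite eqn_leq le_ki andbT -ltnS.
by rewrite -(add0n k.+1) digitD digit0 modn_small // ltn_divLR // -expnSr.
Qed.

Lemma size_phi r a : size (phi p r a) = p ^ r.-1.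
Proof. by rewrite size_map size_iota. Qed.

Lemma nth_phi r a k : k < p ^ r.-1 ->
  nth 0 (phi p r a) k =
    (digit p a r.-1 + \sum_(i < r.-1) digit p a i * digit p k i) %% p.
Proof.
move=> k_lt; rewrite (nth_map 0) ?size_iota // nth_iota // add0n.
by congr ((_ + _) %% p); apply: eq_bigr => i _; rewrite Yent_digit.
Qed.

Lemma phi_inj r : {in [pred a | a < p ^ r] &, injective (phi p r)}.
Proof.
case: r => [|n] a b; first by rewrite !inE expn0 !ltnS !leqn0 => /eqP-> /eqP->.
rewrite !inE => a_lt b_lt eq_phi.
have phi_at k : k < p ^ n ->
    (digit p a n + \sum_(i < n) digit p a i * digit p k i) %% p
  = (digit p b n + \sum_(i < n) digit p b i * digit p k i) %% p.
  by move=> k_lt; have := congr1 (nth 0 ^~ k) eq_phi; rewrite !nth_phi.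
have sum_at_pow x i : i < n -> \sum_(l < n) digit p x l * digit p (p ^ i) l = digit p x i.
  move=> lt_in; rewrite (bigD1 (Ordinal lt_in)) //= big1 => [|l ne_li].
    by rewrite digit_pow eqxx muln1 addn0.
  by rewrite digit_pow (negbTE (ne_li : nat_of_ord l != i)) muln0.
have top : digit p a n = digit p b n.
  have := phi_at 0 (expp_gt0 n).
  rewrite !big1 => [|l _|l _]; try by rewrite (digit_small (expp_gt0 l)) muln0.
  by rewrite !addn0 !modn_small ?digit_lt.
apply: (digit_inj a_lt b_lt) => l; rewrite ltnS leq_eqVlt => /predU1P [-> //| lt_ln].
have pl_lt : p ^ l < p ^ n by rewrite ltn_exp2l.
move/eqP: (phi_at _ pl_lt); rewrite !sum_at_pow // top eqn_modDl.
by rewrite !modn_small ?digit_lt // => /eqP.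
Qed.

Lemma shape_map_phi r s : shape (map (phi p r) s) = nseq (size s) (p ^ r.-1).
Proof. by elim: s => //= a s ->; rewrite size_phi. Qed.

Lemma size_Phi r s : size (Phi p r s) = size s * p ^ r.-1.
Proof. by rewrite size_flatten shape_map_phi sumn_nseq mulnC. Qed.

Lemma Phi_inj r s1 s2 :
  all (fun a => a < p ^ r) s1 -> all (fun a => a < p ^ r) s2 ->
  Phi p r s1 = Phi p r s2 -> s1 = s2.
Proof.
move=> s1_lt s2_lt eq_Phi.
have eq_size : size s1 = size s2.
  by apply/eqP; rewrite -(eqn_pmul2r (expp_gt0 r.-1)) -!size_Phi eq_Phi.
apply: (inj_in_map (@phi_inj r)) => //.
by rewrite -[LHS]flattenK -[RHS]flattenK !shape_map_phi eq_size; congr reshape.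
Qed.

Lemma Phi_gamma_inv n (g : nat -> nat) x :
  (forall j t, j < p -> t < p ^ n ->
     nth 0 (phi p n.+1 (g j)) t = nth 0 x (j + t * p)) ->
  Phi p n.+1 (map g (iota 0 p)) = gamma_inv p n.+2 x.
Proof.
move=> blocks; rewrite /gamma_inv !subSS !subn0.
apply: (@eq_from_nth _ 0) => [|m]; first by rewrite size_Phi !size_map !size_iota expnS.
rewrite size_Phi size_map size_iota => m_lt.
have j_lt : m %/ p ^ n < p by rewrite ltn_divLR.
have t_lt : m %% p ^ n < p ^ n by rewrite ltn_pmod.
rewrite (nth_map 0) ?size_iota ?expnS // nth_iota ?expnS // add0n.
have sizes : all (fun s => size s == p ^ n) (map (phi p n.+1) (map g (iota 0 p))).
  by apply/allP => _ /mapP [a _ ->]; rewrite size_phi.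
rewrite /Phi {1}(divn_eq m (p ^ n)) nth_flatten_uniform ?size_map ?size_iota //.
rewrite (nth_map 0) ?size_map ?size_iota // (nth_map 0) ?size_iota //.
by rewrite nth_iota // blocks.
Qed.

Lemma tau_from_blocks n u (g : nat -> nat) :
  (forall j, j < p -> g j < p ^ n.+1) ->
  (forall j t, j < p -> t < p ^ n ->
     nth 0 (phi p n.+1 (g j)) t = nth 0 (phi p n.+2 u) (j + t * p)) ->
  exists w, tau p n.+2 u = Some w /\ forall j : 'I_p, val (w j) = g j.
Proof.
move=> g_lt blocks.
pose w0 : {ffun 'I_p -> 'I_(p ^ (n.+2 - 1))} :=
  [ffun j : 'I_p => Ordinal (g_lt j (ltn_ord j))].
have vals_w0 : [seq val (w0 j) | j <- enum 'I_p] = map g (iota 0 p).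
  by rewrite -val_enum_ord -map_comp; apply: eq_map => j; rewrite /= ffunE.
have Phi_w0 :
    Phi p n.+1 [seq val (w0 j) | j <- enum 'I_p] = gamma_inv p n.+2 (phi p n.+2 u).
  by rewrite vals_w0; apply: Phi_gamma_inv.
rewrite /tau; case: pickP => [w /eqP Phi_w | no_w]; last first.
  by move: (no_w w0); rewrite Phi_w0 eqxx.
exists w; split=> // j.
have vals_lt (v : {ffun 'I_p -> 'I_(p ^ (n.+2 - 1))}) :
    all (fun a => a < p ^ n.+1) [seq val (v i) | i <- enum 'I_p].
  by apply/allP => _ /mapP [i _ ->]; apply: ltn_ord.
have eq_vals : [seq val (w i) | i <- enum 'I_p] = [seq val (w0 i) | i <- enum 'I_p].
  by apply: (Phi_inj (vals_lt w) (vals_lt w0)); rewrite Phi_w0; exact: Phi_w.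
have := congr1 (nth 0 ^~ (j : nat)) eq_vals.
rewrite vals_w0 (nth_map j) ?size_enum_ord // nth_ord_enum => ->.
by rewrite (nth_map 0) ?size_iota ?nth_iota.
Qed.

Lemma nth_phi_block n u j t : j < p -> t < p ^ n ->
  nth 0 (phi p n.+2 u) (j + t * p) =
    (digit p u n.+1 + digit p u 0 * j + \sum_(l < n) digit p u l.+1 * digit p t l) %% p.
Proof.
move=> j_lt t_lt.
have k_lt : j + t * p < p ^ n.+1 by rewrite expnSr ltn_addM.
have digit_k0 : digit p (j + t * p) 0 = j by rewrite digit0 addnC modnMDl modn_small.
have digit_kS l : digit p (j + t * p) l.+1 = digit p t l.
  by rewrite digitS addnC divnMDl // divn_small ?addn0.
rewrite nth_phi // big_ord_recl digit_k0 addnA.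
by congr ((_ + _) %% p); apply: eq_bigr => l _; rewrite digit_kS.
Qed.

Lemma tau_formula n u : exists w, tau p n.+2 u = Some w /\ forall j : 'I_p,
  val (w j) = u %/ p %% p ^ n + (digit p u n.+1 + digit p u 0 * j) %% p * p ^ n.
Proof.
pose g j := u %/ p %% p ^ n + (digit p u n.+1 + digit p u 0 * j) %% p * p ^ n.
apply: (tau_from_blocks (g := g)) => [j _ | j t j_lt t_lt].
  by rewrite expnS ltn_addM ?ltn_pmod.
have digit_top : digit p (g j) n = (digit p u n.+1 + digit p u 0 * j) %% p.
  by rewrite digit_addMexp ?ltn_pmod // ltnn subnn digit0 modn_mod.
have digit_low l : l < n -> digit p (g j) l = digit p u l.+1.
  by move=> l_lt; rewrite digit_addMexp ?ltn_pmod // l_lt digit_mod // digitS.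
rewrite nth_phi_block // nth_phi // digit_top modnDml.
by congr ((_ + _) %% p); apply: eq_bigr => l _; rewrite digit_low.
Qed.

Lemma tau_one n :
  exists w, tau p n.+2 1 = Some w /\ forall j : 'I_p, val (w j) = j * p ^ n.
Proof.
have [w [tau_w w_j]] := tau_formula n 1; exists w; split=> // j.
have digit_one l : digit p 1 l = (l == 0) by rewrite -[1](expn0 p) digit_pow.
by rewrite w_j !digit_one /= add0n mul1n divn_small // mod0n add0n modn_small.
Qed.

Lemma tau_pmul n v : v < p ^ n.+1 ->
  exists w, tau p n.+2 (p * v) = Some w /\ forall j : 'I_p, val (w j) = v.
Proof.
move=> v_lt; have [w [tau_w w_j]] := tau_formula n (p * v); exists w; split=> // j.
rewrite w_j digit0 modnMr mul0n addn0 digitS !mulKn // modn_mod /digit.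
have top_lt : v %/ p ^ n < p by rewrite ltn_divLR // -expnS.
by rewrite (modn_small top_lt) addnC -divn_eq.
Qed.

End Tau.

Theorem lemma4 (p s : nat) :
  prime p -> 2 <= s ->
  (exists w, tau p s 1 = Some w /\
     forall j : 'I_p, val (w j) = j * p ^ (s - 2)) /\
  (forall i u, 1 <= i <= s - 1 -> u < p ^ (s - 1) ->
     exists w, tau p s ((p ^ i * u) %% p ^ s) = Some w /\
       forall j : 'I_p, val (w j) = (p ^ (i - 1) * u) %% p ^ (s - 1)).
Proof.
move=> /prime_gt1 p_gt1; case: s => [|[|n]] // _; split.
  by rewrite (_ : n.+2 - 2 = n) ?subn2 //; apply: tau_one.
(* Only 1 <= i matters: the bounds i <= s - 1 and u < p ^ (s - 1) are absorbed
   by the reductions mod p ^ s and mod p ^ (s - 1). *)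
move=> i u /andP [i_gt0 _] _.
have -> : p ^ i * u %% p ^ n.+2 = p * (p ^ (i - 1) * u %% p ^ n.+1).
  by rewrite muln_modr mulnA -!expnS subn1 prednK.
by apply: (tau_pmul p_gt1); rewrite ltn_pmod // expn_gt0 ltnW.
Qed.
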